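(* Let $t_0\in[1/2,1]$ be a point where $t\mapsto\left[2t^{4/3}+2(\sqrt{t(1-t)})^{4/3}\right]^{3/4}$ attains its maximum on $[1/2,1]$ ($t_0\approx0.9147$). For every $k\in\mathbb{N}$, $$L_{\mathbb{R},2k}\ge\left[\sum_{j=0}^{2k}\binom{2k}{j}\left|\frac{A_j}{\binom{2k}{j}}\right|^{\frac{4k}{2k+1}}\right]^{\frac{2k+1}{4k}},$$ where $$A_j=\sum_{\ell=0}^{\lfloor j/2\rfloor}\frac{k!\,(-1)^{k-j+\ell}\,t_0^{k-j+2\ell}\,\big(2\sqrt{t_0(1-t_0)}\big)^{j-2\ell}}{\ell!\,(j-2\ell)!\,(k-j+\ell)!},\qquad j=0,\dots,2k$$ (terms with $k-j+\ell<0$ being $0$); these $A_j$ are the coefficients of $x^jy^{2k-j}$ in $(t_0x^2-t_0y^2+2\sqrt{t_0(1-t_0)}\,xy)^k$.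
   Context: All spaces are real. $\check P$ is the polar of an $m$-homogeneous polynomial $P$ (the unique symmetric $m$-linear form with $\check P(x,\dots,x)=P(x)$). For $x_1,\dots,x_N$ in a Banach space $X$, $\|(x_j)\|_{w,1}=\sup\{\sum_j|\varphi(x_j)|:\varphi\in X',\|\varphi\|\le1\}$. $L_{\mathbb{R},m}$ is the smallest constant $L$ such that for every real Banach space $X$, every continuous $m$-homogeneous $P:X\to\mathbb{R}$, every $N$ and all $x^{(k)}_j\in X$: $\big(\sum_{j_1,\dots,j_m=1}^N|\check P(x^{(1)}_{j_1},\dots,x^{(m)}_{j_m})|^{\frac{2m}{m+1}}\big)^{\frac{m+1}{2m}}\le L\|P\|\prod_{k=1}^m\|(x^{(k)}_j)_{j=1}^N\|_{w,1}$. $\lfloor h\rfloor$ is the integer part. *)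

From Stdlib Require Import Reals Lra Lia Arith.
Open Scope R_scope.

(* Real power of a nonnegative real, with the convention 0^p = 0
   (Stdlib's Rpower 0 p = 1, which is not what we want). *)
Definition rpow (x p : R) : R := if Rlt_dec 0 x then Rpower x p else 0.

Fixpoint fsum (N : nat) (g : nat -> R) : R :=
  match N with O => 0 | S n => fsum n g + g n end.
Fixpoint fprod (N : nat) (g : nat -> R) : R :=
  match N with O => 1 | S n => fprod n g * g n end.

(* msum m N f = sum of f J over all multi-indices J = (J 0, ..., J (m-1))
   with each J i in {0,...,N-1}. *)
Definition ncons (j : nat) (J : nat -> nat) : nat -> nat :=
  fun i => match i with O => j | S i' => J i' end.
Fixpoint msum (m N : nat) (f : (nat -> nat) -> R) : R :=
  match m with
  | O => f (fun _ => O)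
  | S m' => fsum N (fun j => msum m' N (fun J => f (ncons j J)))
  end.

Record BanachSpace := {
  carrier :> Type;
  vzero : carrier;
  vadd : carrier -> carrier -> carrier;
  vscal : R -> carrier -> carrier;
  vnorm : carrier -> R;
  vadd_assoc : forall x y z, vadd x (vadd y z) = vadd (vadd x y) z;
  vadd_comm : forall x y, vadd x y = vadd y x;
  vadd_zero : forall x, vadd x vzero = x;
  vadd_opp : forall x, vadd x (vscal (-1) x) = vzero;
  vscal_one : forall x, vscal 1 x = x;
  vscal_assoc : forall a b x, vscal a (vscal b x) = vscal (a * b) x;
  vscal_addv : forall a x y, vscal a (vadd x y) = vadd (vscal a x) (vscal a y);
  vscal_adds : forall a b x, vscal (a + b) x = vadd (vscal a x) (vscal b x);
  vnorm_nonneg : forall x, 0 <= vnorm x;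
  vnorm_eq0 : forall x, vnorm x = 0 -> x = vzero;
  vnorm_scal : forall a x, vnorm (vscal a x) = Rabs a * vnorm x;
  vnorm_triangle : forall x y, vnorm (vadd x y) <= vnorm x + vnorm y;
  vcomplete : forall u : nat -> carrier,
    (forall eps, 0 < eps -> exists N, forall n p, (N <= n)%nat -> (N <= p)%nat ->
        vnorm (vadd (u n) (vscal (-1) (u p))) < eps) ->
    exists l, forall eps, 0 < eps -> exists N, forall n, (N <= n)%nat ->
        vnorm (vadd (u n) (vscal (-1) l)) < eps
}.

Arguments vzero {_}. Arguments vadd {_}. Arguments vscal {_}. Arguments vnorm {_}.

Definition upd {X : Type} (x : nat -> X) (i : nat) (v : X) : nat -> X :=
  fun j => if Nat.eqb j i then v else x j.

(* m-linear forms A : X^m -> R, arguments given as x : nat -> X of which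
   only x 0, ..., x (m-1) matter. *)
Definition only_first (X : BanachSpace) (m : nat) (A : (nat -> X) -> R) : Prop :=
  forall x y : nat -> X, (forall i, (i < m)%nat -> x i = y i) -> A x = A y.

Definition multilinear (X : BanachSpace) (m : nat) (A : (nat -> X) -> R) : Prop :=
  forall (x : nat -> X) (i : nat), (i < m)%nat ->
  forall (a : R) (u v : X),
    A (upd x i (vadd (vscal a u) v)) = a * A (upd x i u) + A (upd x i v).

Definition is_perm (m : nat) (s : nat -> nat) : Prop :=
  (forall i, (i < m)%nat -> (s i < m)%nat) /\
  (forall i j, (i < m)%nat -> (j < m)%nat -> s i = s j -> i = j).

Definition symmetric (X : BanachSpace) (m : nat) (A : (nat -> X) -> R) : Prop :=
  forall (s : nat -> nat) (x : nat -> X), is_perm m s -> A (fun i => x (s i)) = A x.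

Definition bounded_form (X : BanachSpace) (m : nat) (A : (nat -> X) -> R) : Prop :=
  exists C, forall x : nat -> X, Rabs (A x) <= C * fprod m (fun i => vnorm (x i)).

(* A continuous symmetric m-linear form; it is the polar of the continuous
   m-homogeneous polynomial P x = A (x,...,x), and every such P arises this way
   from exactly one such A. *)
Definition sym_form (X : BanachSpace) (m : nat) (A : (nat -> X) -> R) : Prop :=
  only_first X m A /\ multilinear X m A /\ symmetric X m A /\ bounded_form X m A.

Definition diag {X : Type} (x : X) : nat -> X := fun _ => x.

Definition is_poly_norm (X : BanachSpace) (m : nat) (A : (nat -> X) -> R) (nP : R) : Prop :=
  is_lub (fun r => exists x : X, vnorm x <= 1 /\ r = Rabs (A (diag x))) nP.

Definition dual_unit (X : BanachSpace) (phi : X -> R) : Prop :=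
  (forall (a : R) (u v : X), phi (vadd (vscal a u) v) = a * phi u + phi v) /\
  (forall x, Rabs (phi x) <= vnorm x).

Definition is_weak1_norm (X : BanachSpace) (N : nat) (x : nat -> X) (w : R) : Prop :=
  is_lub (fun r => exists phi, dual_unit X phi /\ r = fsum N (fun j => Rabs (phi (x j)))) w.

(* L is an admissible constant in the definition of L_{R,m};
   xs k j = x^{(k+1)}_{j+1}. *)
Definition admissible (m : nat) (L : R) : Prop :=
  forall (X : BanachSpace) (A : (nat -> X) -> R) (N : nat) (xs : nat -> nat -> X)
         (nP : R) (w : nat -> R),
    sym_form X m A ->
    is_poly_norm X m A nP ->
    (forall k, (k < m)%nat -> is_weak1_norm X N (xs k) (w k)) ->
    rpow (msum m N (fun J => rpow (Rabs (A (fun i => xs i (J i))))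
                                  (2 * INR m / (INR m + 1))))
         ((INR m + 1) / (2 * INR m))
    <= L * nP * fprod m w.

Definition gfun (t : R) : R :=
  rpow (2 * rpow t (4/3) + 2 * rpow (sqrt (t * (1 - t))) (4/3)) (3/4).

Definition Acoef (k : nat) (t0 : R) (j : nat) : R :=
  fsum (Nat.div j 2 + 1) (fun l =>
    if Nat.leb j (k + l) then
      INR (fact k) * (-1) ^ (k + l - j) * t0 ^ (k + 2 * l - j)
      * (2 * sqrt (t0 * (1 - t0))) ^ (j - 2 * l)
      / (INR (fact l) * INR (fact (j - 2 * l)) * INR (fact (k + l - j)))
    else 0).

Definition lower_bound (k : nat) (t0 : R) : R :=
  rpow (fsum (2 * k + 1) (fun j =>
          C (2 * k) j * rpow (Rabs (Acoef k t0 j / C (2 * k) j))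
                             (4 * INR k / (2 * INR k + 1))))
       ((2 * INR k + 1) / (4 * INR k)).

(* The defining inequality of L_{R,2k} is tested on the two-dimensional space
   l∞² = (R², max-norm) with N = 2 and every family equal to the unit basis
   (e₀, e₁), whose weak l¹-norm is 1.  The test polynomial is
   P(a, b) = q(a, b)^k with q(a, b) = t₀a² + 2√(t₀(1-t₀))ab - t₀b²; since
   -b² <= q(a, b) <= a², we get ||P|| <= 1, and ||P|| >= P(e₀) = t₀^k > 0.
   Writing P(a, b) = Σ_j C(2k,j) F_j a^j b^(2k-j), its polar is
   (v₁,...,v_m) |-> Σ_j F_j [X^j] Π_i (fst vᵢ X + snd vᵢ); at basis vectors it
   takes the value F_j, j being the number of factors e₀, so the left-hand
   side of the inequality is (Σ_j C(2k,j) |F_j|^(4k/(2k+1)))^((2k+1)/(4k)).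
   The trinomial expansion identifies C(2k,j) F_j with the coefficient A_j. *)

From Stdlib Require Import Reals Lra Lia Arith FinFun FunctionalExtensionality.
Open Scope R_scope.

Lemma fsum_ext N f g : (forall i, (i < N)%nat -> f i = g i) -> fsum N f = fsum N g.
Proof.
  revert f g; induction N as [|N IH]; intros f g Hfg; simpl; [reflexivity|].
  rewrite (IH f g), Hfg; auto; intros; apply Hfg; lia.
Qed.

Lemma fsum_plus N f g : fsum N (fun i => f i + g i) = fsum N f + fsum N g.
Proof. induction N; simpl; [|rewrite IHN]; ring. Qed.

Lemma fsum_scal N a f : fsum N (fun i => a * f i) = a * fsum N f.
Proof. induction N; simpl; [|rewrite IHN]; ring. Qed.

Lemma fsum_scal_r N a f : fsum N (fun i => f i * a) = fsum N f * a.
Proof. induction N; simpl; [|rewrite IHN]; ring. Qed.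

Lemma fsum_zero N f : (forall i, (i < N)%nat -> f i = 0) -> fsum N f = 0.
Proof.
  intros Hf; rewrite (fsum_ext N f (fun _ => 0)) by exact Hf.
  clear; induction N; simpl; lra.
Qed.

Lemma fsum_shift N f : fsum (S N) f = f 0%nat + fsum N (fun i => f (S i)).
Proof. induction N; simpl in *; [|rewrite IHN]; ring. Qed.

Lemma fsum_split a b f : fsum (a + b) f = fsum a f + fsum b (fun i => f (a + i)%nat).
Proof.
  induction b as [|b IH]; simpl; [rewrite Nat.add_0_r; ring|].
  rewrite Nat.add_succ_r; simpl; rewrite IH; ring.
Qed.

Lemma fsum_abs N f : Rabs (fsum N f) <= fsum N (fun i => Rabs (f i)).
Proof.
  induction N; simpl; [rewrite Rabs_R0; lra|].
  eapply Rle_trans; [apply Rabs_triang|lra].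
Qed.

Lemma fsum_le N f g : (forall i, (i < N)%nat -> f i <= g i) -> fsum N f <= fsum N g.
Proof.
  revert f g; induction N as [|N IH]; intros f g Hfg; simpl; [lra|].
  apply Rplus_le_compat; [apply IH; intros; apply Hfg|apply Hfg]; lia.
Qed.

Lemma fsum_swap N M f :
  fsum N (fun i => fsum M (fun j => f i j)) = fsum M (fun j => fsum N (fun i => f i j)).
Proof.
  induction N; simpl; [symmetry; apply fsum_zero; reflexivity|].
  rewrite IHN, <- fsum_plus; reflexivity.
Qed.

Lemma fsum_delta N c g :
  (c < N)%nat -> fsum N (fun j => if Nat.eqb j c then g j else 0) = g c.
Proof.
  intros Hc; replace N with (c + (1 + (N - c - 1)))%nat by lia.
  rewrite !fsum_split, fsum_zero, (fsum_zero (N - c - 1)); simpl.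
  - rewrite Nat.add_0_r, Nat.eqb_refl; ring.
  - intros i _; destruct (Nat.eqb_spec (c + S i) c); [lia|reflexivity].
  - intros i Hi; destruct (Nat.eqb_spec i c); [lia|reflexivity].
Qed.

Lemma fsum_extend n N h h' :
  (n <= N)%nat -> (forall l, (l < n)%nat -> h' l = h l) ->
  (forall l, (n <= l < N)%nat -> h' l = 0) -> fsum n h = fsum N h'.
Proof.
  intros HnN Heq Hzero; replace N with (n + (N - n))%nat by lia.
  rewrite fsum_split, (fsum_zero (N - n)) by (intros; apply Hzero; lia).
  rewrite Rplus_0_r; apply fsum_ext; intros; symmetry; auto.
Qed.

Lemma sum_f_R0_fsum f n : sum_f_R0 f n = fsum (S n) f.
Proof. induction n; simpl; [ring|rewrite IHn; reflexivity]. Qed.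

Lemma lt_half_succ j l : (l < Nat.div j 2 + 1)%nat <-> (2 * l <= j)%nat.
Proof. pose proof (Nat.div_mod j 2); pose proof (Nat.mod_upper_bound j 2); lia. Qed.

Lemma regroup_row k l h :
  fsum (2 * k + 1) (fun j => if andb (Nat.leb (2 * l) j) (Nat.leb j (k + l))
                             then h l (j - 2 * l)%nat else 0)
  = if Nat.leb l k then fsum (k - l + 1) (fun g => h l g) else 0.
Proof.
  destruct (Nat.leb_spec l k) as [Hlk|Hkl].
  - replace (2 * k + 1)%nat with (2 * l + ((k - l + 1) + (k - l)))%nat by lia.
    rewrite fsum_split, (fsum_split (k - l + 1) (k - l)), fsum_zero, (fsum_zero (k - l)).
    + rewrite Rplus_0_l, Rplus_0_r; apply fsum_ext; intros g Hg.
      destruct (Nat.leb_spec (2 * l) (2 * l + g)); [|lia].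
      destruct (Nat.leb_spec (2 * l + g) (k + l)); [|lia].
      replace (2 * l + g - 2 * l)%nat with g by lia; reflexivity.
    + intros i _; destruct (Nat.leb_spec (2 * l + (k - l + 1 + i)) (k + l)); [lia|].
      rewrite Bool.andb_false_r; reflexivity.
    + intros i Hi; destruct (Nat.leb_spec (2 * l) i); [lia|reflexivity].
  - apply fsum_zero; intros j _.
    destruct (Nat.leb_spec (2 * l) j), (Nat.leb_spec j (k + l)); try lia; reflexivity.
Qed.

(* The index regrouping behind the trinomial expansion: the pairs (j, l) with
   2l <= j <= k + l, j <= 2k, correspond to the pairs (l, g) with l <= k,
   g <= k - l, via j = 2l + g. *)
Lemma fsum_regroup k (h : nat -> nat -> R) :
  fsum (2 * k + 1) (fun j => fsum (Nat.div j 2 + 1) (fun l =>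
      if Nat.leb j (k + l) then h l (j - 2 * l)%nat else 0))
  = fsum (k + 1) (fun l => fsum (k - l + 1) (fun g => h l g)).
Proof.
  rewrite (fsum_ext _ _ (fun j => fsum (2 * k + 1) (fun l =>
      if andb (Nat.leb (2 * l) j) (Nat.leb j (k + l)) then h l (j - 2 * l)%nat else 0))).
  2:{ intros j Hj; apply fsum_extend.
      - pose proof (lt_half_succ j (Nat.div j 2)); lia.
      - intros l Hl%lt_half_succ; destruct (Nat.leb_spec (2 * l) j); [reflexivity|lia].
      - intros l [Hl _]; destruct (Nat.leb_spec (2 * l) j) as [H2l|]; [|reflexivity].
        apply lt_half_succ in H2l; lia. }
  rewrite fsum_swap; symmetry; apply fsum_extend; [lia| |].
  - intros l Hl; rewrite regroup_row; destruct (Nat.leb_spec l k); [reflexivity|lia].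
  - intros l Hl; rewrite regroup_row; destruct (Nat.leb_spec l k); [lia|reflexivity].
Qed.

(* Trinomial coefficients of (a X^2 + d X Y + b Y^2)^k: the coefficient of
   X^j Y^(2k-j) collects the terms a^l (dXY)^(j-2l) (bY^2)^(k+l-j). *)
Definition tricoef (k : nat) (a d b : R) (j : nat) : R :=
  fsum (Nat.div j 2 + 1) (fun l =>
    if Nat.leb j (k + l) then
      INR (fact k) / (INR (fact l) * INR (fact (j - 2 * l)) * INR (fact (k + l - j)))
      * a ^ l * d ^ (j - 2 * l) * b ^ (k + l - j)
    else 0).

(* Regroup the terms by (l, g) and expand twice by the binomial theorem. *)
Lemma trinomial_expansion k a d b x y :
  fsum (2 * k + 1) (fun j => tricoef k a d b j * x ^ j * y ^ (2 * k - j)) =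
  (a * x ^ 2 + d * x * y + b * y ^ 2) ^ k.
Proof.
  set (h := fun l g => INR (fact k) / (INR (fact l) * INR (fact g) * INR (fact (k - l - g)))
            * a ^ l * d ^ g * b ^ (k - l - g) * x ^ (2 * l + g) * y ^ (g + 2 * (k - l - g))).
  transitivity (fsum (k + 1) (fun l => fsum (k - l + 1) (fun g => h l g))).
  - rewrite <- fsum_regroup; apply fsum_ext; intros j Hj.
    unfold tricoef; rewrite <- !fsum_scal_r; apply fsum_ext; intros l Hl%lt_half_succ.
    destruct (Nat.leb_spec j (k + l)); [|ring].
    unfold h; replace (k - l - (j - 2 * l))%nat with (k + l - j)%nat by lia.
    replace (2 * l + (j - 2 * l))%nat with j by lia.
    replace (j - 2 * l + 2 * (k + l - j))%nat with (2 * k - j)%nat by lia.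
    reflexivity.
  - replace (a * x ^ 2 + d * x * y + b * y ^ 2) with (a * x ^ 2 + (d * x * y + b * y ^ 2)) by ring.
    rewrite binomial, sum_f_R0_fsum, Nat.add_1_r; apply fsum_ext; intros l Hl.
    rewrite binomial, sum_f_R0_fsum, Nat.add_1_r.
    rewrite <- fsum_scal; apply fsum_ext; intros g Hg.
    unfold h, C; rewrite !pow_add, !pow_mult, !Rpow_mult_distr.
    pose proof (INR_fact_neq_0 l); pose proof (INR_fact_neq_0 g);
    pose proof (INR_fact_neq_0 (k - l)); pose proof (INR_fact_neq_0 (k - l - g)).
    field; auto.
Qed.

Definition R2 : Type := (R * R)%type.
Definition v2add (p q : R2) : R2 := (fst p + fst q, snd p + snd q).
Definition v2scal (a : R) (p : R2) : R2 := (a * fst p, a * snd p).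
Definition v2norm (p : R2) : R := Rmax (Rabs (fst p)) (Rabs (snd p)).

Lemma pair_eq (a b c d : R) : a = c -> b = d -> (a, b) = (c, d).
Proof. intros -> ->; reflexivity. Qed.

Lemma v2norm_nonneg p : 0 <= v2norm p.
Proof. eapply Rle_trans; [apply Rabs_pos|apply Rmax_l]. Qed.

(* Completeness of l∞² reduces to that of R, coordinatewise. *)
Lemma v2complete (u : nat -> R2) :
  (forall eps, 0 < eps -> exists N, forall n p, (N <= n)%nat -> (N <= p)%nat ->
      v2norm (v2add (u n) (v2scal (-1) (u p))) < eps) ->
  exists l, forall eps, 0 < eps -> exists N, forall n, (N <= n)%nat ->
      v2norm (v2add (u n) (v2scal (-1) l)) < eps.
Proof.
  intros Hu.
  assert (Hcoord : forall pr : R2 -> R,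
            (forall p, Rabs (pr p) <= v2norm p) ->
            (forall a p q, pr (v2add (v2scal a p) q) = a * pr p + pr q) ->
            Cauchy_crit (fun n => pr (u n))).
  { intros pr Hpr Hlin e He; destruct (Hu e He) as [N HN]; exists N; intros n p Hn Hp.
    unfold Rdist; eapply Rle_lt_trans; [|exact (HN n p Hn Hp)].
    replace (pr (u n) - pr (u p)) with (pr (v2add (u n) (v2scal (-1) (u p)))); [apply Hpr|].
    replace (v2add (u n) (v2scal (-1) (u p))) with (v2add (v2scal (-1) (u p)) (u n))
      by (unfold v2add; apply pair_eq; ring).
    rewrite Hlin; ring. }
  destruct (R_complete _ (Hcoord fst (fun p => Rmax_l _ _) (fun a p q => eq_refl))) as [l1 H1].
  destruct (R_complete _ (Hcoord snd (fun p => Rmax_r _ _) (fun a p q => eq_refl))) as [l2 H2].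
  exists (l1, l2); intros e He.
  destruct (H1 e He) as [N1 HN1], (H2 e He) as [N2 HN2].
  exists (max N1 N2); intros n Hn; unfold v2norm, v2add, v2scal; simpl.
  apply Rmax_lub_lt.
  - replace (fst (u n) + -1 * l1) with (fst (u n) - l1) by ring; apply HN1; lia.
  - replace (snd (u n) + -1 * l2) with (snd (u n) - l2) by ring; apply HN2; lia.
Qed.

Definition linf2 : BanachSpace.
Proof.
  refine {| carrier := R2; vzero := (0, 0); vadd := v2add; vscal := v2scal;
            vnorm := v2norm; vcomplete := v2complete |};
    unfold v2add, v2scal, v2norm.
  1-8: intros; repeat match goal with p : R2 |- _ => destruct p end; apply pair_eq; simpl; ring.
  - intros; apply v2norm_nonneg.
  - intros [a b] H; simpl in *.
    pose proof (Rmax_l (Rabs a) (Rabs b)); pose proof (Rmax_r (Rabs a) (Rabs b)).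
    apply pair_eq; unfold Rabs in *; destruct (Rcase_abs a), (Rcase_abs b); lra.
  - intros a [x y]; simpl; rewrite !Rabs_mult; apply RmaxRmult, Rabs_pos.
  - intros [a b] [c d]; simpl.
    apply Rmax_lub; (eapply Rle_trans; [apply Rabs_triang|]);
      apply Rplus_le_compat; first [apply Rmax_l | apply Rmax_r].
Defined.

(* Folding a right action whose successive steps commute: the result does not
   depend on the order of the sequence, hence is invariant under permutations
   of the first m entries.  This gives the symmetry of the polar form. *)
Section CommutingFold.
Variables (T U : Type) (op : T -> U -> T) (c0 : T).
Hypothesis op_comm : forall c u w, op (op c u) w = op (op c w) u.

Fixpoint foldop (m : nat) (v : nat -> U) : T :=
  match m with O => c0 | S m' => op (foldop m' v) (v m') end.

Lemma foldop_ext m v w : (forall i, (i < m)%nat -> v i = w i) -> foldop m v = foldop m w.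
Proof.
  revert v w; induction m as [|m IH]; intros v w Hvw; simpl; [reflexivity|].
  rewrite (IH v w), Hvw; auto.
Qed.

Lemma foldop_exch m w p x : (p < m)%nat ->
  op (foldop m w) x = op (foldop m (upd w p x)) (w p).
Proof.
  revert w p x; induction m as [|m IH]; intros w p x Hp; [lia|simpl].
  unfold upd at 2; destruct (Nat.eqb_spec m p) as [->|Hmp].
  - rewrite (foldop_ext p (upd w p x) w); [apply op_comm|].
    intros i Hi; unfold upd; destruct (Nat.eqb_spec i p); [lia|reflexivity].
  - rewrite op_comm, (IH w p x), op_comm by lia; reflexivity.
Qed.

Lemma perm_drop_last m s p :
  is_perm (S m) s -> (p < S m)%nat -> s p = m -> is_perm m (upd s p (s m)).
Proof.
  intros [Hrange Hinj] Hp Hsp; unfold upd; split.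
  - intros i Hi; destruct (Nat.eqb_spec i p) as [->|Hip].
    + assert (s m <> m) by (intro E; rewrite <- Hsp in E; apply Hinj in E; lia).
      specialize (Hrange m); lia.
    + assert (s i <> m) by (intro E; rewrite <- Hsp in E; apply Hinj in E; lia).
      specialize (Hrange i); lia.
  - intros i j Hi Hj; destruct (Nat.eqb_spec i p), (Nat.eqb_spec j p); intro E;
      try lia; apply Hinj in E; lia.
Qed.

(* By induction: move the preimage of the last index (it exists because an
   injection of {0..m} into itself is onto) to the last position. *)
Lemma foldop_perm m s v : is_perm m s -> foldop m (fun i => v (s i)) = foldop m v.
Proof.
  revert s v; induction m as [|m IH]; intros s v Hs; [reflexivity|].
  destruct (proj1 (bInjective_bSurjective (proj1 Hs)) (proj2 Hs) m (Nat.lt_succ_diag_r m))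
    as [p [Hp Hsp]].
  pose proof (perm_drop_last m s p Hs Hp Hsp) as Hs'.
  simpl; destruct (Nat.eq_dec p m) as [->|Hpm].
  - rewrite Hsp, <- (IH _ v Hs'); f_equal; apply foldop_ext.
    intros i Hi; unfold upd; destruct (Nat.eqb_spec i m); [lia|reflexivity].
  - rewrite (foldop_exch m _ p) by lia; cbv beta; rewrite Hsp, <- (IH _ v Hs'); f_equal.
    apply foldop_ext; intros i _; unfold upd; destruct (Nat.eqb_spec i p); reflexivity.
Qed.
End CommutingFold.

Arguments foldop {T U} op c0 m v.

(* Sequences c : nat -> R are coefficient sequences of polynomials in X;
   [mul_linear c u] is the sequence of c(X) * (fst u * X + snd u). *)
Definition mul_linear (c : nat -> R) (u : R2) : nat -> R :=
  fun j => match j with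
           | O => snd u * c O
           | S j' => fst u * c j' + snd u * c (S j')
           end.

Definition coef_one : nat -> R := fun j => match j with O => 1 | _ => 0 end.

(* [prod_coef m v j] is the coefficient of X^j in the product of the linear
   polynomials fst (v i) * X + snd (v i), i < m. *)
Definition prod_coef (m : nat) (v : nat -> R2) : nat -> R := foldop mul_linear coef_one m v.

Lemma prod_coef_S m v : prod_coef (S m) v = mul_linear (prod_coef m v) (v m).
Proof. reflexivity. Qed.

Lemma prod_coef_ext m v w :
  (forall i, (i < m)%nat -> v i = w i) -> prod_coef m v = prod_coef m w.
Proof. apply foldop_ext. Qed.

Lemma prod_coef_perm m s v : is_perm m s -> prod_coef m (fun i => v (s i)) = prod_coef m v.
Proof.
  apply foldop_perm; intros c u w; apply functional_extensionality.
  intros [|[|j]]; unfold mul_linear; simpl; ring.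
Qed.

Lemma prod_coef_linear m v i a u w j : (i < m)%nat ->
  prod_coef m (upd v i (v2add (v2scal a u) w)) j
  = a * prod_coef m (upd v i u) j + prod_coef m (upd v i w) j.
Proof.
  revert v i j; induction m as [|m IH]; intros v i j Hi; [lia|rewrite !prod_coef_S].
  unfold upd at 2 4 6; destruct (Nat.eqb_spec m i) as [<-|Him].
  - rewrite !(prod_coef_ext m (upd v m _) v)
      by (intros l Hl; unfold upd; destruct (Nat.eqb_spec l m); [lia|reflexivity]).
    destruct j; unfold mul_linear, v2add, v2scal; simpl; ring.
  - destruct j; unfold mul_linear; rewrite ?IH by lia; ring.
Qed.

Lemma prod_coef_bound m v j :
  Rabs (prod_coef m v j) <= 2 ^ m * fprod m (fun i => v2norm (v i)).
Proof.
  revert j; induction m as [|m IH]; intros j.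
  - destruct j; simpl; rewrite ?Rabs_R1, ?Rabs_R0; lra.
  - rewrite prod_coef_S; simpl fprod; simpl pow.
    set (M := 2 ^ m * fprod m (fun i => v2norm (v i))) in *.
    assert (Ha : Rabs (fst (v m)) <= v2norm (v m)) by apply Rmax_l.
    assert (Hb : Rabs (snd (v m)) <= v2norm (v m)) by apply Rmax_r.
    assert (Hterm : forall x i, Rabs x <= v2norm (v m) ->
                                Rabs (x * prod_coef m v i) <= v2norm (v m) * M)
      by (intros x i Hx; rewrite Rabs_mult; apply Rmult_le_compat; auto using Rabs_pos).
    pose proof (v2norm_nonneg (v m)); pose proof (Rabs_pos (prod_coef m v 0)).
    replace (2 * 2 ^ m * (fprod m (fun i => v2norm (v i)) * v2norm (v m)))
      with (2 * (v2norm (v m) * M)) by (unfold M; ring).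
    destruct j; unfold mul_linear.
    + pose proof (Hterm _ 0%nat Hb); assert (0 <= v2norm (v m) * M) by
        (eapply Rle_trans; [apply Rabs_pos|eauto]); lra.
    + eapply Rle_trans; [apply Rabs_triang|].
      pose proof (Hterm _ j Ha); pose proof (Hterm _ (S j) Hb); lra.
Qed.

Lemma prod_coef_high m v j : (m < j)%nat -> prod_coef m v j = 0.
Proof.
  revert j; induction m as [|m IH]; intros j Hj; [destruct j; [lia|reflexivity]|].
  rewrite prod_coef_S; destruct j; [lia|]; unfold mul_linear; rewrite !IH by lia; ring.
Qed.

Lemma C_n0 n : C n 0 = 1.
Proof. unfold C; rewrite Nat.sub_0_r; simpl; field; apply INR_fact_neq_0. Qed.

Lemma C_nn n : C n n = 1.
Proof. unfold C; rewrite Nat.sub_diag; simpl; field; apply INR_fact_neq_0. Qed.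

Lemma prod_coef_diag m a b j : (j <= m)%nat ->
  prod_coef m (diag ((a, b) : R2)) j = C m j * a ^ j * b ^ (m - j).
Proof.
  revert j; induction m as [|m IH]; intros j Hj.
  - replace j with 0%nat by lia; simpl; rewrite C_n0; ring.
  - rewrite prod_coef_S; unfold diag at 2.
    destruct j as [|j]; unfold mul_linear; simpl fst; simpl snd.
    + rewrite IH, !Nat.sub_0_r, !C_n0 by lia; cbn [pow]; ring.
    + destruct (Nat.eq_dec j m) as [->|Hjm].
      * rewrite (prod_coef_high m _ (S m)), IH, !C_nn, !Nat.sub_diag by lia; cbn [pow]; ring.
      * rewrite !IH, <- pascal by lia.
        rewrite Nat.sub_succ; replace (m - j)%nat with (S (m - S j)) by lia; cbn [pow]; ring.
Qed.

(* The polar of the m-homogeneous polynomial (a, b) |-> Σ_j C(m,j) F_j a^j b^(m-j)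
   on l∞²: a continuous symmetric m-linear form. *)
Definition polar_form (m : nat) (F : nat -> R) (v : nat -> linf2) : R :=
  fsum (S m) (fun j => F j * prod_coef m v j).

Lemma polar_form_sym m F : sym_form linf2 m (polar_form m F).
Proof.
  unfold polar_form; split; [|split; [|split]].
  - intros x y Hxy; rewrite (prod_coef_ext m x y Hxy); reflexivity.
  - intros x i Hi a u v; rewrite <- fsum_scal, <- fsum_plus; apply fsum_ext; intros j _.
    change (@vadd linf2) with v2add; change (@vscal linf2) with v2scal;
      change (carrier linf2) with R2.
    rewrite prod_coef_linear by exact Hi; ring.
  - intros s x Hs; rewrite prod_coef_perm by exact Hs; reflexivity.
  - exists (2 ^ m * fsum (S m) (fun j => Rabs (F j))); intros x.
    eapply Rle_trans; [apply fsum_abs|].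
    change (@vnorm linf2) with v2norm.
    replace (2 ^ m * fsum (S m) (fun j => Rabs (F j)) * fprod m (fun i => v2norm (x i)))
      with (fsum (S m) (fun j => Rabs (F j) * (2 ^ m * fprod m (fun i => v2norm (x i)))))
      by (rewrite fsum_scal_r; ring).
    apply fsum_le; intros j _; rewrite Rabs_mult.
    apply Rmult_le_compat_l; [apply Rabs_pos|apply prod_coef_bound].
Qed.

Lemma polar_form_diag m F a b :
  polar_form m F (diag ((a, b) : linf2))
  = fsum (S m) (fun j => F j * C m j * a ^ j * b ^ (m - j)).
Proof.
  apply fsum_ext; intros j Hj.
  transitivity (F j * (C m j * a ^ j * b ^ (m - j))); [|ring].
  f_equal; apply prod_coef_diag; lia.
Qed.

Definition basis (j : nat) : linf2 := if Nat.eqb j 0 then (1, 0) else (0, 1).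

Fixpoint count_zero (m : nat) (J : nat -> nat) : nat :=
  match m with
  | O => O
  | S m' => (count_zero m' J + if Nat.eqb (J m') 0 then 1 else 0)%nat
  end.

Lemma count_zero_le m J : (count_zero m J <= m)%nat.
Proof. induction m; simpl; [lia|destruct (Nat.eqb _ _); lia]. Qed.

(* count_zero also peels off the first index, as msum does. *)
Lemma count_zero_front m J : count_zero (S m) J =
  ((if Nat.eqb (J 0%nat) 0 then 1 else 0) + count_zero m (fun i => J (S i)))%nat.
Proof.
  revert J; induction m as [|m IH]; intros J; simpl; [lia|]; simpl in IH; rewrite IH; lia.
Qed.

Lemma prod_coef_basis m J j :
  prod_coef m (fun i => basis (J i)) j = if Nat.eqb j (count_zero m J) then 1 else 0.
Proof.
  revert j; induction m as [|m IH]; intros j; [destruct j; reflexivity|].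
  rewrite prod_coef_S; simpl count_zero; unfold basis at 2.
  destruct (Nat.eqb_spec (J m) 0), j as [|j]; unfold mul_linear; simpl fst; simpl snd;
    rewrite ?IH, ?Nat.add_0_r, ?Nat.add_1_r; simpl Nat.eqb; try ring.
  destruct (count_zero m J); simpl; ring.
Qed.

Lemma polar_form_basis m F J : polar_form m F (fun i => basis (J i)) = F (count_zero m J).
Proof.
  unfold polar_form.
  rewrite (fsum_ext _ _ (fun j => if Nat.eqb j (count_zero m J) then F j else 0)).
  - apply fsum_delta; pose proof (count_zero_le m J); lia.
  - intros j _; rewrite prod_coef_basis; destruct (Nat.eqb _ _); ring.
Qed.

Lemma msum_ext m N f g : (forall J, f J = g J) -> msum m N f = msum m N g.
Proof.
  revert N f g; induction m as [|m IH]; intros N f g Hfg; simpl; [apply Hfg|].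
  apply fsum_ext; intros; apply IH; auto.
Qed.

Lemma binomial_sum_pascal m g :
  fsum (S (S m)) (fun j => C (S m) j * g j)
  = fsum (S m) (fun j => C m j * g (S j)) + fsum (S m) (fun j => C m j * g j).
Proof.
  rewrite fsum_shift, (fsum_shift m (fun j => C m j * g j)); cbn [fsum].
  rewrite !C_n0, !C_nn, <- (fsum_ext m (fun i => C m i * g (S i) + C m (S i) * g (S i))).
  - rewrite fsum_plus; ring.
  - intros i Hi; rewrite <- pascal by exact Hi; ring.
Qed.

Lemma msum_count_zero m g :
  msum m 2 (fun J => g (count_zero m J)) = fsum (S m) (fun j => C m j * g j).
Proof.
  revert g; induction m as [|m IH]; intros g; [simpl; rewrite C_n0; ring|].
  rewrite binomial_sum_pascal, <- !IH; cbn [msum fsum].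
  rewrite Rplus_0_l; f_equal; apply msum_ext; intros J; rewrite count_zero_front; reflexivity.
Qed.

Lemma rpow_nonneg x p : 0 <= rpow x p.
Proof. unfold rpow; destruct (Rlt_dec 0 x); [apply Rlt_le, exp_pos|lra]. Qed.

Lemma fprod_one m : fprod m (fun _ => 1) = 1.
Proof. induction m; simpl; [|rewrite IHm]; ring. Qed.

Definition test_sum (X : BanachSpace) (m N : nat) (A : (nat -> X) -> R)
    (xs : nat -> nat -> X) : R :=
  rpow (msum m N (fun J => rpow (Rabs (A (fun i => xs i (J i)))) (2 * INR m / (INR m + 1))))
       ((INR m + 1) / (2 * INR m)).

Lemma admissible_test m L (X : BanachSpace) A N xs nP :
  admissible m L -> sym_form X m A -> is_poly_norm X m A nP -> 0 < nP <= 1 ->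
  (forall i, (i < m)%nat -> is_weak1_norm X N (xs i) 1) ->
  test_sum X m N A xs <= L.
Proof.
  intros HL HA HnP Hn Hw.
  pose proof (HL X A N xs nP (fun _ => 1) HA HnP Hw) as Hadm.
  rewrite fprod_one, Rmult_1_r in Hadm; fold (test_sum X m N A xs) in Hadm.
  assert (0 <= test_sum X m N A xs) by apply rpow_nonneg.
  nra.
Qed.

Lemma poly_norm_exists (X : BanachSpace) m A M (x0 : X) :
  vnorm x0 <= 1 -> (forall x : X, vnorm x <= 1 -> Rabs (A (diag x)) <= M) ->
  exists nP, is_poly_norm X m A nP /\ Rabs (A (diag x0)) <= nP <= M.
Proof.
  intros Hx0 Hbound.
  destruct (completeness (fun r => exists x : X, vnorm x <= 1 /\ r = Rabs (A (diag x))))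
    as [nP HnP].
  - exists M; intros r [x [Hx ->]]; auto.
  - exists (Rabs (A (diag x0))), x0; auto.
  - exists nP; split; [exact HnP|split].
    + apply HnP; exists x0; auto.
    + apply HnP; intros r [x [Hx ->]]; auto.
Qed.

Lemma dual_on_basis (phi : linf2 -> R) : dual_unit linf2 phi ->
  forall a b, phi ((a, b) : linf2) = a * phi (basis 0) + b * phi (basis 1).
Proof.
  intros [Hlin _] a b.
  assert (Hcomb : forall a u v, phi (v2add (v2scal a u) v) = a * phi u + phi v) by exact Hlin.
  assert (H0 : phi ((0, 0) : linf2) = 0).
  { pose proof (Hcomb 1 (0, 0) (0, 0)) as E; unfold v2add, v2scal in E; simpl in E.
    rewrite Rmult_0_r, Rplus_0_l in E; lra. }
  pose proof (Hcomb b (0, 1) (0, 0)) as Eb; pose proof (Hcomb a (1, 0) (0, b)) as Ea.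
  unfold v2add, v2scal in Ea, Eb; simpl in Ea, Eb.
  rewrite !Rmult_0_r, !Rmult_1_r, !Rplus_0_l, !Rplus_0_r in Ea, Eb.
  unfold basis; simpl; lra.
Qed.

Lemma abs_as_sign_mult p : exists s, Rabs s <= 1 /\ Rabs p = s * p.
Proof.
  destruct (Rle_dec 0 p); [exists 1|exists (-1)];
    split; unfold Rabs; repeat destruct (Rcase_abs _); lra.
Qed.

(* The unit basis of l∞² has weak l¹-norm 1: |phi e₀| + |phi e₁| = phi (±1, ±1). *)
Lemma basis_weak1_norm : is_weak1_norm linf2 2 basis 1.
Proof.
  split.
  - intros r [phi [Hphi ->]]; cbn [fsum].
    destruct (abs_as_sign_mult (phi (basis 0))) as [s0 [Hs0 ->]].
    destruct (abs_as_sign_mult (phi (basis 1))) as [s1 [Hs1 ->]].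
    rewrite Rplus_0_l, <- (dual_on_basis phi Hphi).
    eapply Rle_trans; [apply Rle_abs|]; eapply Rle_trans; [apply (proj2 Hphi)|].
    apply Rmax_lub; assumption.
  - intros b Hb; apply Hb; exists fst; split.
    + split; [intros a u v; reflexivity|intros x; apply Rmax_l].
    + cbn; rewrite Rabs_R1, Rabs_R0; ring.
Qed.

(* For c² = t(1 - t) with t > 0 the quadratic form q = t a² + 2c ab - t b²
   satisfies -b² <= q <= a², because t(a² - q) = (tb - ca)² and
   t(q + b²) = (ta + cb)². *)
Lemma quad_form_between t c a b : 0 < t -> c * c = t * (1 - t) ->
  - (b * b) <= t * a ^ 2 + 2 * c * a * b + (- t) * b ^ 2 <= a * a.
Proof.
  intros Ht Hc; set (q := t * a ^ 2 + 2 * c * a * b + (- t) * b ^ 2).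
  assert (Hup : t * (a * a - q) = (t * b - c * a) ^ 2)
    by (unfold q; replace (t * (1 - t)) with (t - t * t) in Hc by ring; nra).
  assert (Hlow : t * (q + b * b) = (t * a + c * b) ^ 2)
    by (unfold q; replace (t * (1 - t)) with (t - t * t) in Hc by ring; nra).
  pose proof (pow2_ge_0 (t * b - c * a)); pose proof (pow2_ge_0 (t * a + c * b)).
  split; nra.
Qed.

Lemma C_pos n j : 0 < C n j.
Proof.
  unfold C; apply Rdiv_lt_0_compat; [apply INR_fact_lt_0|].
  apply Rmult_lt_0_compat; apply INR_fact_lt_0.
Qed.

Lemma Acoef_tricoef k t0 j :
  Acoef k t0 j = tricoef k t0 (2 * sqrt (t0 * (1 - t0))) (- t0) j.
Proof.
  apply fsum_ext; intros l Hl%lt_half_succ.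
  destruct (Nat.leb_spec j (k + l)); [|reflexivity].
  replace (k + 2 * l - j)%nat with (l + (k + l - j))%nat by lia.
  replace (- t0) with (-1 * t0) by ring.
  rewrite pow_add, !Rpow_mult_distr; field.
  pose proof (INR_fact_neq_0 l); pose proof (INR_fact_neq_0 (j - 2 * l));
    pose proof (INR_fact_neq_0 (k + l - j)); auto.
Qed.

Lemma sq_le_1 a : Rabs a <= 1 -> a * a <= 1.
Proof. unfold Rabs; destruct (Rcase_abs a); nra. Qed.

(* The test form: the polar of P(a, b) = (t₀a² + 2√(t₀(1-t₀))ab - t₀b²)^k on l∞². *)
Definition extremal_coef (k : nat) (t0 : R) (j : nat) : R := Acoef k t0 j / C (2 * k) j.

Lemma extremal_form_diag k t0 a b :
  polar_form (2 * k) (extremal_coef k t0) (diag ((a, b) : linf2)) =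
  (t0 * a ^ 2 + 2 * sqrt (t0 * (1 - t0)) * a * b + (- t0) * b ^ 2) ^ k.
Proof.
  rewrite polar_form_diag, <- trinomial_expansion, Nat.add_1_r.
  apply fsum_ext; intros j Hj; unfold extremal_coef; rewrite Acoef_tricoef.
  pose proof (C_pos (2 * k) j); field; lra.
Qed.

(* 0 < ||P|| <= 1: the bound from [quad_form_between], the positivity from
   P(1, 0) = t₀^k. *)
Lemma extremal_poly_norm k t0 : 0 < t0 <= 1 ->
  exists nP, is_poly_norm linf2 (2 * k) (polar_form (2 * k) (extremal_coef k t0)) nP
             /\ 0 < nP <= 1.
Proof.
  intros Ht.
  set (c := sqrt (t0 * (1 - t0))).
  assert (Hc : c * c = t0 * (1 - t0)) by (apply sqrt_sqrt; nra).
  destruct (poly_norm_exists linf2 (2 * k) (polar_form (2 * k) (extremal_coef k t0)) 1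
              ((1, 0) : linf2)) as [nP [HnP [Hlow Hup]]].
  - apply Rmax_lub; simpl; rewrite ?Rabs_R1, ?Rabs_R0; lra.
  - intros [a b] Hx; rewrite extremal_form_diag, <- RPow_abs; fold c; rewrite <- (pow1 k).
    pose proof (sq_le_1 a (Rle_trans _ _ _ (Rmax_l _ _) Hx)).
    pose proof (sq_le_1 b (Rle_trans _ _ _ (Rmax_r _ _) Hx)).
    pose proof (quad_form_between t0 c a b ltac:(lra) Hc).
    apply pow_incr; split; [apply Rabs_pos|apply Rabs_le; lra].
  - exists nP; split; [exact HnP|split; [|exact Hup]].
    eapply Rlt_le_trans; [|exact Hlow].
    rewrite extremal_form_diag; fold c.
    replace (t0 * 1 ^ 2 + 2 * c * 1 * 0 + - t0 * 0 ^ 2) with t0 by ring.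
    rewrite Rabs_pos_eq by (apply pow_le; lra); apply pow_lt; lra.
Qed.

Lemma lower_bound_as_test_sum k t0 :
  lower_bound k t0
  = test_sum linf2 (2 * k) 2 (polar_form (2 * k) (extremal_coef k t0)) (fun _ => basis).
Proof.
  unfold test_sum.
  set (g := fun j => rpow (Rabs (extremal_coef k t0 j)) (2 * INR (2 * k) / (INR (2 * k) + 1))).
  rewrite (msum_ext _ _ _ (fun J => g (count_zero (2 * k) J)))
    by (intros J; unfold g; rewrite <- polar_form_basis; reflexivity).
  rewrite msum_count_zero; unfold g.
  replace (2 * INR (2 * k)) with (4 * INR k) by (rewrite mult_INR; simpl; ring).
  replace (INR (2 * k) + 1) with (2 * INR k + 1) by (rewrite mult_INR; simpl; ring).
  unfold lower_bound, extremal_coef; rewrite Nat.add_1_r; reflexivity.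
Qed.

Theorem mainTheorem5 :
  forall (k : nat), (1 <= k)%nat ->
  forall t0 : R, 1/2 <= t0 <= 1 ->
  (forall t, 1/2 <= t <= 1 -> gfun t <= gfun t0) ->
  forall L : R, admissible (2 * k) L ->
  lower_bound k t0 <= L.
Proof.
  intros k _ t0 Ht _ L HL.
  destruct (extremal_poly_norm k t0) as [nP [HnP Hpos]]; [lra|].
  rewrite lower_bound_as_test_sum.
  apply (admissible_test _ _ _ _ _ _ nP HL (polar_form_sym _ _) HnP Hpos).
  intros _ _; exact basis_weak1_norm.
Qed.
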